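(* Let $\boldsymbol{G}\in\{0,1\}^{r\times m}$ with $r\le m$, let $p=\min\{\lfloor m/2\rfloor,r\}$, and let $q$ be a prime power with $q\ge q_{\min}=\binom{m}{p}$. Then in every execution of the MCD algorithm on $(\boldsymbol{G},q)$, at every step where an entry $h_{k,i}$ ($k\in[r]$, $i\in G_k$) is assigned, the set $\mathbb{F}_q\setminus Z_{k,i}^{L}$ is nonempty, i.e. there is always a value outside the veto set.
   Context: $G_k=\{i: g_{k,i}=1\}$. $\boldsymbol{H}_{[k]}$ is the first $k$ rows of $\boldsymbol{H}\in\mathbb{F}_q^{r\times m}$, $\boldsymbol{H}^{L}_{[k]}$ its columns in $L$. A set $S$ of column indices is a circuit of a matrix if its columns are linearly dependent but those of every proper subset are independent. Veto set: for $2\le k\le r$, $i\in L\subseteq[m]$, with all entries of $\boldsymbol{H}_{[k]}^{L}$ except $h_{k,i}$ fixed, and a circuit $C$ of $\boldsymbol{H}_{[k-1]}$ with $i\in C\subseteq L$, write column $i$ of $\boldsymbol{H}_{[k-1]}$ uniquely as $\sum_{j\in C\setminus\{i\}}f_j\cdot(\text{column }j)$ and set $c(C)=\sum_{j\in C\setminus\{i\}}f_jh_{k,j}$; $Z_{k,i}^{L}=\{c(L'\cup\{i\}):L'\subseteq L\setminus\{i\},\ L'\cup\{i\}\text{ a circuit of }\boldsymbol{H}_{[k-1]}\}$. MCD algorithm: set $h_{k,i}=0$ whenever $g_{k,i}=0$; set $h_{1,i}=1$ for $i\in G_1$; for $k=2,\dots,r$: let $R=G_k$; while $R\ne\emptyset$: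 pick any $i\in R$, set $R\leftarrow R\setminus\{i\}$, $L=[m]\setminus R$, compute $Z_{k,i}^{L}$ from the current entries, and assign to $h_{k,i}$ an arbitrary element of $\mathbb{F}_q\setminus Z_{k,i}^{L}$. *)

From HB Require Import structures.
From mathcomp Require Import all_boot all_order all_algebra.
Set Implicit Arguments. Unset Strict Implicit. Unset Printing Implicit Defensive.
Import GRing.Theory.
Local Open Scope ring_scope.

Section MCD.
Variables (F : fieldType) (r m : nat).

(* H_[k]: the first k rows of H (0-based rows 0..k-1), represented by the
   r x m matrix whose rows >= k are zeroed out (zero rows do not affect
   linear (in)dependence of columns). *)
Definition topk (k : nat) (H : 'M[F]_(r, m)) : 'M[F]_(r, m) :=
  \matrix_(a, j) if (a < k)%N then H a j else 0.

Definition cols_of (k : nat) (H : 'M[F]_(r, m)) (S : {set 'I_m}) : seq 'cV[F]_r :=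
  [seq col j (topk k H) | j <- enum S].

Definition is_circuit (k : nat) (H : 'M[F]_(r, m)) (S : {set 'I_m}) : bool :=
  ~~ free (cols_of k H S) &&
  [forall T : {set 'I_m}, (T \proper S) ==> free (cols_of k H T)].

(* z \in Z_{k,i}^L, where k0 : 'I_r is the 0-based index of row k
   (so H_[k-1] = topk k0 H and h_{k,j} = H k0 j). *)
Definition veto (k0 : 'I_r) (H : 'M[F]_(r, m)) (L : {set 'I_m}) (i : 'I_m)
    (z : F) : Prop :=
  exists L' : {set 'I_m},
    [/\ L' \subset L :\ i,
        is_circuit k0 H (i |: L') &
        exists f : 'I_m -> F,
          col i (topk k0 H) = \sum_(j in L') f j *: col j (topk k0 H) /\
          z = \sum_(j in L') f j * H k0 j].

(* H is consistent with an execution of the MCD algorithm on G using, for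
   each row k >= 1 (0-based), the processing order s k of G_k, up to (but not
   including) the step of row k0 whose already-processed prefix is pre.
   At the step processing i with s k = pre ++ i :: post, the remaining set is
   R = post and L = [m] \ R. *)
Definition mcd_prefix (G : 'M[bool]_(r, m)) (s : 'I_r -> seq 'I_m)
    (H : 'M[F]_(r, m)) (k0 : 'I_r) (pre0 : seq 'I_m) : Prop :=
  [/\ (forall k j, ~~ G k j -> H k j = 0),
      (forall (k : 'I_r) j, val k = 0%N -> G k j -> H k j = 1),
      (forall k : 'I_r, (0 < k)%N -> perm_eq (s k) (enum [set j | G k j])) &
      (forall (k : 'I_r) pre i post, (0 < k)%N -> s k = pre ++ i :: post ->
         ((k < k0)%N \/ (k = k0 /\ (size pre < size pre0)%N)) ->
         ~ veto k H (~: [set x in post]) i (H k i))].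

End MCD.

From HB Require Import structures.
From mathcomp Require Import all_boot all_order all_algebra zify.
From Stdlib Require Import Classical ClassicalEpsilon.
Set Implicit Arguments. Unset Strict Implicit. Unset Printing Implicit Defensive.
Import GRing.Theory.
Local Open Scope ring_scope.

(* The veto set is small whatever the current matrix is.  Let d be the rank of
   the columns of H_[k-1] other than i; since H_[k-1] has k-1 nonzero rows,
   d <= k-1 < r.  Every veto value c(C) comes from an independent set
   C \ {i}, which extends to a basis T of the span of those columns, and
   c(C) is the image of column i under the linear form "coordinates in T,
   paired with row k"; so it depends only on T.  Hence |Z| <= C(m-1, d), and
   C(m-1, d) < C(m, p) <= q by unimodality of the binomial coefficients. *)

Section ColumnFamilies.
Variables (F : fieldType) (r m k : nat) (H : 'M[F]_(r, m)).
Local Notation v j := (col j (topk k H)).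

Lemma sum_cols_of (S : {set 'I_m}) (j0 : 'I_m) (a : 'I_m -> F) :
  \sum_(t < size (cols_of k H S)) a (nth j0 (enum S) t) *: (cols_of k H S)`_t
  = \sum_(j in S) a j *: v j.
Proof.
rewrite -[RHS]big_enum /= [RHS](big_nth j0) big_mkord /cols_of size_map.
by apply: eq_bigr => t _; rewrite (nth_map j0).
Qed.

Lemma free_cols_ofP (S : {set 'I_m}) (a : 'I_m -> F) :
  free (cols_of k H S) -> \sum_(j in S) a j *: v j = 0 -> {in S, forall j, a j = 0}.
Proof.
move=> /(@freeP _ _ _ (in_tuple _)) freeS a0 j jS.
have jS' : (index j (enum S) < size (cols_of k H S))%N.
  by rewrite size_map index_mem mem_enum.
have := freeS (fun t => a (nth j (enum S) t)); rewrite sum_cols_of.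
by move=> /(_ a0 (Ordinal jS')) /=; rewrite nth_index ?mem_enum.
Qed.

Lemma perm_cols_of_setU1 (T : {set 'I_m}) (j : 'I_m) : j \notin T ->
  perm_eq (cols_of k H (j |: T)) (v j :: cols_of k H T).
Proof.
move=> jT; rewrite /cols_of -[v j :: _]/[seq v x | x <- j :: enum T].
apply/perm_map/uniq_perm; rewrite ?enum_uniq //= ?mem_enum ?jT ?enum_uniq //.
by move=> x; rewrite in_cons !mem_enum in_setU1.
Qed.

Lemma span_cols_ofS (A B : {set 'I_m}) :
  A \subset B -> (<<cols_of k H A>> <= <<cols_of k H B>>)%VS.
Proof.
move=> AB; apply: sub_span => x /mapP[j jA ->].
by apply: map_f; rewrite mem_enum (subsetP AB) // -mem_enum.
Qed.

Lemma free_cols_of_extend (A L : {set 'I_m}) :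
  L \subset A -> free (cols_of k H L) ->
  exists T : {set 'I_m}, [/\ L \subset T, T \subset A, free (cols_of k H T)
                           & #|T| = \dim <<cols_of k H A>>%VS].
Proof.
move=> LA freeL.
pose admissible (T : {set 'I_m}) := [&& L \subset T, T \subset A & free (cols_of k H T)].
have admL : admissible L by rewrite /admissible subxx LA.
case: (arg_maxnP (fun T : {set 'I_m} => #|T|) admL).
move=> T /and3P[LT TA freeT] maxT; exists T; split=> //.
have -> : #|T| = \dim <<cols_of k H T>>%VS by rewrite (eqP freeT) size_map cardE.
congr (\dim _); apply/eqP; rewrite eqEsubv span_cols_ofS //=.
apply/span_subvP => x /mapP[j]; rewrite mem_enum => jA ->.
have [jT | jT] := boolP (j \in T).
  by apply: memv_span; apply: map_f; rewrite mem_enum.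
have : ~~ admissible (j |: T).
  by apply/negP => /maxT /=; rewrite cardsU1 jT ltnn.
rewrite /admissible /= subUset sub1set jA TA (subset_trans LT (subsetUr _ _)) /=.
by rewrite (perm_free (perm_cols_of_setU1 jT)) free_cons freeT andbT negbK.
Qed.

Lemma dim_span_cols_of_topk (A : {set 'I_m}) : (\dim <<cols_of k H A>>%VS <= k)%N.
Proof.
pose E := [set a : 'I_r | (a < k)%N].
pose deltas := [seq (delta_mx a 0 : 'cV[F]_r) | a <- enum E].
have card_E : (#|E| <= k)%N.
  rewrite cardE -(size_map val) -(size_iota 0 k); apply: uniq_leq_size.
    by rewrite map_inj_uniq ?enum_uniq //; apply: val_inj.
  by move=> x /mapP[a]; rewrite mem_enum inE => ak ->; rewrite mem_iota.
apply: leq_trans card_E; rewrite cardE -(size_map (fun a => delta_mx a 0 : 'cV[F]_r)).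
apply: leq_trans (dim_span deltas); apply: dimvS.
apply/span_subvP => x /mapP[j _ ->].
rewrite [col j _]matrix_sum_delta; apply: memv_suml => a _.
rewrite big_ord1 ord1; have [ak | ka] := ltnP a k.
  by apply/memvZ/memv_span/map_f; rewrite mem_enum inE.
by rewrite !mxE ltnNge ka scale0r mem0v.
Qed.

Lemma lincomb_cols_of_uniq (T L1 L2 : {set 'I_m}) (f1 f2 h : 'I_m -> F) :
  free (cols_of k H T) -> L1 \subset T -> L2 \subset T ->
  \sum_(j in L1) f1 j *: v j = \sum_(j in L2) f2 j *: v j ->
  \sum_(j in L1) f1 j * h j = \sum_(j in L2) f2 j * h j.
Proof.
move=> freeT L1T L2T e12.
pose ext (L : {set 'I_m}) (f : 'I_m -> F) j : F := if j \in L then f j else 0.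
have sum_ext (V : nmodType) (op : F -> 'I_m -> V) (L : {set 'I_m}) f :
    (forall j, op 0 j = 0) -> L \subset T ->
    \sum_(j in L) op (f j) j = \sum_(j in T) op (ext L f j) j.
  move=> op0 LT; rewrite big_mkcond [RHS]big_mkcond; apply: eq_bigr => j _.
  rewrite /ext; have [jL | //] := boolP (j \in L); first by rewrite (subsetP LT).
  by case: (j \in T); rewrite ?op0.
have scale0 j : 0 *: v j = 0 by rewrite scale0r.
have mul0 j : 0 * h j = 0 by rewrite mul0r.
have : {in T, forall j, ext L1 f1 j - ext L2 f2 j = 0}.
  apply: free_cols_ofP freeT _; under eq_bigr do rewrite scalerBl.
  by rewrite sumrB -!(sum_ext _ (fun x j => x *: v j)) // e12 subrr.
move=> ext12; rewrite (sum_ext _ (fun x j => x * h j) L1) //.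
rewrite (sum_ext _ (fun x j => x * h j) L2) //.
by apply: eq_bigr => j /ext12 /eqP; rewrite subr_eq0 => /eqP ->.
Qed.

End ColumnFamilies.

Lemma card_le_functional_rel (A B : finType) (Z : {set A}) (D : {set B})
    (P : A -> B -> Prop) :
  (forall a, a \in Z -> exists2 b, b \in D & P a b) ->
  (forall a1 a2 b, P a1 b -> P a2 b -> a1 = a2) -> (#|Z| <= #|D|)%N.
Proof.
move=> exP P_inj.
have {}exP (a : {a | a \in Z}) : exists b : {b | b \in D}, P (val a) (val b).
  by case: a => a aZ; have [b bD Pab] := exP a aZ; exists (exist _ b bD).
pose g a := proj1_sig (constructive_indefinite_description _ (exP a)).
have gP a : P (val a) (val (g a)).
  exact: proj2_sig (constructive_indefinite_description _ (exP a)).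
have g_inj : injective g.
  by move=> a1 a2 g12; apply/val_inj/(P_inj _ _ (val (g a1)) (gP a1)); rewrite g12.
by move: (leq_card _ g_inj); rewrite !card_sig.
Qed.

Section VetoSet.
Variables (F : fieldType) (r m : nat) (k0 : 'I_r) (H : 'M[F]_(r, m)) (i : 'I_m).
Local Notation v j := (col j (topk k0 H)).

Definition veto_value_on (T : {set 'I_m}) (z : F) : Prop :=
  exists (L' : {set 'I_m}) (f : 'I_m -> F),
    [/\ L' \subset T, v i = \sum_(j in L') f j *: v j
      & z = \sum_(j in L') f j * H k0 j].

Lemma veto_value_on_uniq (T : {set 'I_m}) (z1 z2 : F) :
  free (cols_of k0 H T) -> veto_value_on T z1 -> veto_value_on T z2 -> z1 = z2.
Proof.
move=> freeT [L1 [f1 [L1T e1 ->]]] [L2 [f2 [L2T e2 ->]]].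
by apply: lincomb_cols_of_uniq freeT L1T L2T _; rewrite -e1 -e2.
Qed.

Lemma veto_value_on_basis (L : {set 'I_m}) (z : F) :
  veto k0 H L i z ->
  exists2 T : {set 'I_m},
    T \in [set T : {set 'I_m} | T \subset ~: [set i]
                               & #|T| == \dim <<cols_of k0 H (~: [set i])>>%VS]
    & free (cols_of k0 H T) /\ veto_value_on T z.
Proof.
move=> [L' [L'L circuit [f [ei ez]]]].
have L'i : L' \subset ~: [set i].
  by apply: subset_trans L'L _; rewrite setDE setIC subsetIl.
have freeL' : free (cols_of k0 H L').
  case/andP: circuit => _ /forallP /(_ L') /implyP; apply.
  rewrite properUr // sub1set.
  by apply/negP => /(subsetP L'i); rewrite !inE eqxx.
have [T [L'T Ti freeT cardT]] := free_cols_of_extend L'i freeL'.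
exists T; first by rewrite inE Ti cardT eqxx.
by split=> //; exists L', f.
Qed.

End VetoSet.

Lemma card_veto_le (F : finFieldType) (r m : nat) (k0 : 'I_r) (H : 'M[F]_(r, m))
    (L : {set 'I_m}) (i : 'I_m) (Z : {set F}) :
  (forall z, z \in Z -> veto k0 H L i z) ->
  (#|Z| <= 'C(m.-1, \dim <<cols_of k0 H (~: [set i])>>%VS))%N.
Proof.
move=> vetoZ; have -> : m.-1 = #|~: [set i]| by rewrite cardsC1 card_ord.
rewrite -cards_draws.
apply: (card_le_functional_rel
  (P := fun z T => free (cols_of k0 H T) /\ veto_value_on k0 H i T z)).
  by move=> z /vetoZ /veto_value_on_basis.
by move=> z1 z2 T [freeT z1T] [_ z2T]; apply: veto_value_on_uniq freeT z1T z2T.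
Qed.

Section BinomialUnimodality.
Local Open Scope nat_scope.

Lemma leq_bin_half n a b : a <= b -> 2 * b <= n.+1 -> 'C(n, a) <= 'C(n, b).
Proof.
elim: b => [|b IHb]; first by rewrite leqn0 => /eqP ->.
rewrite leq_eqVlt ltnS => /orP[/eqP -> // | le_ab] le_b_n.
apply: leq_trans (IHb le_ab _) _; first lia.
rewrite -(@leq_pmul2l b.+1) // mul_bin_left.
by apply: leq_mul => //; lia.
Qed.

Lemma leq_bin_central n d : 'C(n, d) <= 'C(n, n./2).
Proof.
have halfn := odd_double_half n.
have [le_d_half | lt_half_d] := leqP d n./2.
  by apply: leq_bin_half => //; case: (odd n) halfn => /=; lia.
have [le_d_n | lt_n_d] := leqP d n; last by rewrite bin_small.
by rewrite -bin_sub //; apply: leq_bin_half; lia.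
Qed.

(* C(m, p) = C(m-1, p-1) + C(m-1, p) with both terms positive, and one of them
   dominates C(m-1, d): the first if d < p, the central one if p = m/2 <= d. *)
Lemma bin_pred_lt_bin_minn_half m r d :
  1 < r <= m -> d < r -> 'C(m.-1, d) < 'C(m, minn m./2 r).
Proof.
case: m => [|n] /andP[lt_1_r le_r_m] lt_d_r /=; first lia.
have halfn := odd_double_half n; have halfSn := odd_double_half n.+1.
have [p [def_p le_p_n lt_p_r]] :
    exists p, [/\ minn n.+1./2 r = p.+1, 2 * p.+1 <= n.+1 & p < r].
  move: halfSn; case: (leqP n.+1./2 r) => ? ?;
    [exists n.+1./2.-1 | exists r.-1]; split; lia.
rewrite def_p binS.
have C_p_gt0 : 0 < 'C(n, p) by rewrite bin_gt0; lia.
have C_Sp_gt0 : 0 < 'C(n, p.+1) by rewrite bin_gt0; lia.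
have [le_d_p | lt_p_d] := leqP d p.
  have : 'C(n, d) <= 'C(n, p) by apply: leq_bin_half; lia.
  lia.
have half_n : n./2 = p \/ n./2 = p.+1.
  by move: def_p; rewrite /minn; case: ltnP; case: (odd n) halfn halfSn => /=; lia.
have := leq_bin_central n d; case: half_n => ->; lia.
Qed.

End BinomialUnimodality.

Theorem proposition6 (F : finFieldType) (r m : nat) (G : 'M[bool]_(r, m))
  (s : 'I_r -> seq 'I_m) (H : 'M[F]_(r, m)) (k0 : 'I_r)
  (pre : seq 'I_m) (i : 'I_m) (post : seq 'I_m) :
  (r <= m)%N ->
  ('C(m, minn m./2 r) <= #|F|)%N ->
  (0 < k0)%N ->
  s k0 = pre ++ i :: post ->
  mcd_prefix G s H k0 pre ->
  exists z : F, ~ veto k0 H (~: [set x in post]) i z.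
Proof.
move=> le_r_m le_C_F k0_gt0 _ _; apply: NNPP => no_free_value.
have all_veto z : z \in [set: F] -> veto k0 H (~: [set x in post]) i z.
  by move=> _; apply: NNPP => z_free; apply: no_free_value; exists z.
have := card_veto_le all_veto; rewrite cardsT.
set d := \dim _; have le_d_k0 : (d <= k0)%N by apply: dim_span_cols_of_topk.
have lt_1_r : (1 < r)%N by apply: leq_ltn_trans k0_gt0 (ltn_ord k0).
have := @bin_pred_lt_bin_minn_half m r d.
rewrite lt_1_r le_r_m (leq_ltn_trans le_d_k0 (ltn_ord k0)) => /(_ isT isT) lt_C.
by rewrite leqNgt (leq_trans lt_C le_C_F).
Qed.
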